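(* Let $X\in\mathbb{R}^{m\times n}$ have nonnegative entries and let $A_1,\ldots,A_m,B_1,\ldots,B_n$ be $r\times r$ real symmetric positive definite matrices. Define the linear maps $\mathcal{A}:\mathbb{S}^r\to\mathbb{R}^m$, $Z\mapsto(\operatorname{tr}(A_1Z),\ldots,\operatorname{tr}(A_mZ))$ and $\mathcal{B}:\mathbb{S}^r\to\mathbb{R}^n$, $Z\mapsto(\operatorname{tr}(B_1Z),\ldots,\operatorname{tr}(B_nZ))$. Suppose these matrices are fixed points of the Matrix Multiplicative Update rule, i.e. $$A_i=V_i\,\mathcal{B}^\top(X_{i:})\,V_i,\quad V_i=([\mathcal{B}^\top\mathcal{B}](A_i))^{-1}\#A_i\qquad (i\in[m]),$$ $$B_j=W_j\,\mathcal{A}^\top(X_{:j})\,W_j,\quad W_j=([\mathcal{A}^\top\mathcal{A}](B_j))^{-1}\#B_j\qquad (j\in[n]).$$ Then they satisfy the (reduced) KKT conditions of the problem $\inf\sum_{i,j}(X_{ij}-\operatorname{tr}(A_iB_j))^2$ over $A_i,B_j\in\mathbb{S}^r_+$, namely $$\mathcal{B}^\top(X_{i:})=[\mathcal{B}^\top\mathcal{B}](A_i)\ \ (i\in[m]),\qquad \mathcal{A}^\top(X_{:j})=[\mathcal{A}^\top\mathcal{A}](B_j)\ \ (j\in[n]).$$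
   Context: $\mathbb{S}^r$ denotes the space of $r\times r$ real symmetric matrices and $\mathbb{S}^r_+$ the cone of positive semidefinite ones. $X_{i:}\in\mathbb{R}^n$ is the $i$-th row and $X_{:j}\in\mathbb{R}^m$ the $j$-th column of $X$. Adjoints: $\mathcal{A}^\top(y)=\sum_i y_iA_i$, $\mathcal{B}^\top(z)=\sum_j z_jB_j$; thus $[\mathcal{A}^\top\mathcal{A}](Z)=\sum_i\operatorname{tr}(A_iZ)A_i$ and $[\mathcal{B}^\top\mathcal{B}](Z)=\sum_j\operatorname{tr}(B_jZ)B_j$. For positive definite $C,D$, $C\# D=C^{1/2}(C^{-1/2}DC^{-1/2})^{1/2}C^{1/2}$ is the matrix geometric mean. *)

From HB Require Import structures.
From mathcomp Require Import all_boot all_order all_algebra.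
From mathcomp Require Import boolp classical_sets reals.
Set Implicit Arguments. Unset Strict Implicit. Unset Printing Implicit Defensive.
Import Order.TTheory GRing.Theory Num.Theory.
Local Open Scope ring_scope.

Section Defs.
Variable R : realType.

Definition symmx {r} (A : 'M[R]_r) : Prop := A^T = A.

Definition psdmx {r} (A : 'M[R]_r) : Prop :=
  symmx A /\ forall v : 'rV[R]_r, 0 <= (v *m A *m v^T) 0 0.
Definition pdmx {r} (A : 'M[R]_r) : Prop :=
  symmx A /\ forall v : 'rV[R]_r, v != 0 -> 0 < (v *m A *m v^T) 0 0.

(* principal square root: the (unique) PSD matrix S with S S = A
   (chosen classically; defaults to 0 if none exists). *)
Definition msqrt {r} (A : 'M[R]_r) : 'M[R]_r :=
  xget 0 [set S : 'M[R]_r | psdmx S /\ S *m S = A].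

Definition gmean {r} (C D : 'M[R]_r) : 'M[R]_r :=
  let Ch := msqrt C in let Cih := invmx Ch in
  Ch *m msqrt (Cih *m D *m Cih) *m Ch.

(* adjoint B^T(z) = sum_j z_j B_j  of  Z |-> (tr(B_j Z))_j *)
Definition adjop {n r} (B : 'I_n -> 'M[R]_r) (z : 'I_n -> R) : 'M[R]_r :=
  \sum_(j < n) z j *: B j.

Definition gramop {n r} (B : 'I_n -> 'M[R]_r) (Z : 'M[R]_r) : 'M[R]_r :=
  \sum_(j < n) \tr (B j *m Z) *: B j.

End Defs.

From HB Require Import structures.
From mathcomp Require Import all_boot all_order all_algebra.
From mathcomp Require Import boolp classical_sets reals.
Import Order.TTheory GRing.Theory Num.Theory.
Local Open Scope ring_scope.

(* The whole argument is the Riccati property of the geometric mean: the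
   matrix G = P # Q solves G P^-1 G = Q.  Each fixed-point equation has the
   form  Q = G D G  with  G = C^-1 # Q,  Q positive definite (hence invertible),
   D = B^T(X_i:) (resp. A^T(X_:j)) and C = [B^T B](A_i) (resp. [A^T A](B_j)).
   Invertibility of Q forces G to be invertible, so the Riccati property gives
   Q = G C G, and cancelling the invertible factor G on both sides of
   G D G = G C G yields the KKT condition D = C.

   Only the defining property S S = A of the chosen square roots is used, and
   it is recovered from invertibility alone: the square root defaults to 0
   when none exists, and 0 is not invertible (for nonempty matrices). *)

Section GeometricMean.
Variables (R : realType) (r : nat).
Implicit Types A C D G P Q : 'M[R]_r.

Lemma msqrt_unit_sqr A : msqrt A \in unitmx -> msqrt A *m msqrt A = A.
Proof.
case: r A => [|k] A; first by rewrite [_ *m _]flatmx0 [A]flatmx0.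
rewrite /msqrt; case: xgetP => [S _ [_ ->] //|_].
by rewrite unitmxE det0 unitr0.
Qed.

Lemma gmean_riccati P Q :
  gmean P Q \in unitmx -> gmean P Q *m invmx P *m gmean P Q = Q.
Proof.
rewrite /gmean; set Ph := msqrt P; set M := msqrt (invmx Ph *m Q *m invmx Ph).
rewrite !unitmx_mul -andbA => /and3P[Phu Mu _].
have Ph2 : Ph *m Ph = P by apply: msqrt_unit_sqr.
have M2 : M *m M = invmx Ph *m Q *m invmx Ph by apply: msqrt_unit_sqr.
have Pu : P \in unitmx by rewrite -Ph2 unitmx_mul Phu.
have Ph_mid : Ph *m invmx P *m Ph = 1%:M.
  by rewrite -{1}(mulKmx Phu Ph) Ph2 mulmxK // mulVmx.
have -> : Ph *m M *m Ph *m invmx P *m (Ph *m M *m Ph)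
        = Ph *m M *m (Ph *m invmx P *m Ph) *m M *m Ph by rewrite !mulmxA.
rewrite Ph_mid mulmx1 -(mulmxA Ph M M) M2 !mulmxA mulmxV // mul1mx.
by rewrite mulmxKV.
Qed.

Lemma sandwich_inj G C D :
  G \in unitmx -> G *m D *m G = G *m C *m G -> D = C.
Proof.
move=> Gu /(congr1 (fun Y => invmx G *m (Y *m invmx G))).
by rewrite !mulmxK // !mulKmx.
Qed.

Lemma gmean_fixed_point C Q D :
  Q \in unitmx ->
  Q = gmean (invmx C) Q *m D *m gmean (invmx C) Q -> D = C.
Proof.
set G := gmean (invmx C) Q => Qu QE.
have Gu : G \in unitmx by move: Qu; rewrite QE !unitmx_mul => /andP[/andP[]].
have GCG : G *m C *m G = Q by rewrite -{1}(invmxK C) gmean_riccati.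
by apply: (sandwich_inj _ _ _ Gu); rewrite GCG.
Qed.

End GeometricMean.

Lemma pdmx_unit (R : realType) r (A : 'M[R]_r) : pdmx A -> A \in unitmx.
Proof.
move=> [_ posA]; rewrite unitmxE unitfE; apply/negP => /det0P [v vn0 vA].
by move: (posA v vn0); rewrite vA mul0mx mxE ltxx.
Qed.

Theorem theorem2 (R : realType) (m n r : nat) (X : 'M[R]_(m, n))
  (A : 'I_m -> 'M[R]_r) (B : 'I_n -> 'M[R]_r) :
  (forall i j, 0 <= X i j) ->
  (forall i, pdmx (A i)) ->
  (forall j, pdmx (B j)) ->
  (forall i, A i =
     gmean (invmx (gramop B (A i))) (A i)
       *m adjop B (fun j => X i j)
       *m gmean (invmx (gramop B (A i))) (A i)) ->
  (forall j, B j =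
     gmean (invmx (gramop A (B j))) (B j)
       *m adjop A (fun i => X i j)
       *m gmean (invmx (gramop A (B j))) (B j)) ->
  (forall i, adjop B (fun j => X i j) = gramop B (A i)) /\
  (forall j, adjop A (fun i => X i j) = gramop A (B j)).
Proof.
move=> _ pdA pdB fixA fixB; split.
- by move=> i; apply: gmean_fixed_point (fixA i); apply: pdmx_unit.
- by move=> j; apply: gmean_fixed_point (fixB j); apply: pdmx_unit.
Qed.
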